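(* Let $R$ be a unital associative simple algebra over an infinite field $F$ and let $p\in F[x]$ be a nonconstant polynomial. Then $$\mathrm{span}_F\{ab-ba\mid a,b\in R\}\subseteq \mathrm{span}_F\{p(ab)-p(ba)\mid a,b\in R\}.$$
   Context: $\mathrm{span}_F$ denotes the $F$-linear span. *)

From HB Require Import structures.
From mathcomp Require Import all_boot all_order all_algebra.
Set Implicit Arguments. Unset Strict Implicit. Unset Printing Implicit Defensive.
Import Order.TTheory GRing.Theory Num.Theory.
Local Open Scope ring_scope.

Definition infinite_field (F : fieldType) : Prop :=
  forall s : seq F, exists x : F, x \notin s.

Definition alg_ideal (F : fieldType) (R : algType F) (I : R -> Prop) : Prop :=
  [/\ I 0,
      (forall x y, I x -> I y -> I (x + y)),
      (forall (k : F) x, I x -> I (k *: x)),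
      (forall r x, I x -> I (r * x)) &
      (forall r x, I x -> I (x * r))].

Definition simple_algebra (F : fieldType) (R : algType F) : Prop :=
  (1 : R) != 0 /\
  forall I : R -> Prop, alg_ideal I ->
    (forall x, I x -> x = 0) \/ (forall x, I x).

Definition span_F (F : fieldType) (R : algType F) (S : R -> Prop) : R -> Prop :=
  fun x => exists (n : nat) (c : 'I_n -> F) (v : 'I_n -> R),
    (forall i, S (v i)) /\ x = \sum_(i < n) c i *: v i.

(* Let V be the span of the p(ab) - p(ba).  Taking a = 1 + t x, b = y and
   reading off the coefficient of t (F is infinite) gives [x, p(y)] in V, so
   V is a Lie ideal and every p(y) lies in Herstein's T(V) = {x | [x, R] <= V}.
   If T(V) is not commutative, Herstein's argument in the simple algebra R
   gives [R, R] <= V.  Otherwise [p(y), [p(y), r]] = 0 for all r, so p(y)^2 is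
   central; extracting coefficients of polynomials in t, first y^m
   (m = deg p^2) and then y^Q (Q the [char F]-part of m) is central for every
   y.  Then every nonzero element is invertible, and (ad a)^Q = ad (a^Q) = 0
   forces R to be commutative, so [R, R] = 0. *)

From mathcomp Require Import all_boot all_order all_algebra.
From Stdlib Require Import Classical.
Set Implicit Arguments. Unset Strict Implicit. Unset Printing Implicit Defensive.
Import GRing.Theory.
Local Open Scope ring_scope.

(** * Subspaces and coefficient extraction *)

Section Subspace.
Variables (F : fieldType) (V : lmodType F).

Definition subspace (P : V -> Prop) : Prop :=
  [/\ P 0, forall x y, P x -> P y -> P (x + y) & forall (k : F) x, P x -> P (k *: x)].

Variables (P : V -> Prop) (subP : subspace P).

Lemma subspace0 : P 0. Proof. by case: subP. Qed.

Lemma subspaceD x y : P x -> P y -> P (x + y). Proof. by case: subP => _ + _; apply. Qed.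

Lemma subspaceZ k x : P x -> P (k *: x). Proof. by case: subP => _ _; apply. Qed.

Lemma subspaceN x : P x -> P (- x).
Proof. by rewrite -scaleN1r; apply: subspaceZ. Qed.

Lemma subspaceB x y : P x -> P y -> P (x - y).
Proof. by move=> Px /subspaceN; apply: subspaceD. Qed.

Lemma subspace_sum I r (Q : pred I) (f : I -> V) :
  (forall i, Q i -> P (f i)) -> P (\sum_(i <- r | Q i) f i).
Proof. by move=> Pf; apply: big_ind => //; [apply: subspace0 | apply: subspaceD]. Qed.

End Subspace.

Section Span.
Variables (F : fieldType) (R : algType F) (S : R -> Prop).

Lemma subspace_span_F : subspace (span_F S).
Proof.
split.
- by exists 0%N, (fun _ => 0), (fun _ => 0); split => [[]//|]; rewrite big_ord0.
- move=> _ _ [n1 [c1 [v1 [Sv1 ->]]]] [n2 [c2 [v2 [Sv2 ->]]]].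
  pose glue T (f1 : 'I_n1 -> T) (f2 : 'I_n2 -> T) i :=
    match split i with inl j => f1 j | inr j => f2 j end.
  exists (n1 + n2)%N, (glue _ c1 c2), (glue _ v1 v2); split.
    by move=> i; rewrite /glue; case: (split i).
  by rewrite big_split_ord /glue; congr (_ + _); apply: eq_bigr => i _;
    [rewrite (unsplitK (inl i)) | rewrite (unsplitK (inr i))].
- move=> k _ [n [c [v [Sv ->]]]]; exists n, (fun i => k * c i), v; split => //.
  by rewrite scaler_sumr; apply: eq_bigr => i _; rewrite scalerA.
Qed.

Lemma mem_span_F x : S x -> span_F S x.
Proof.
by move=> Sx; exists 1%N, (fun _ => 1), (fun _ => x); split=> //; rewrite big_ord1 scale1r.
Qed.

Lemma span_F_min (P : R -> Prop) :
  subspace P -> (forall x, S x -> P x) -> forall x, span_F S x -> P x.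
Proof.
move=> subP SP _ [n [c [v [Sv ->]]]].
by apply: subspace_sum => // i _; apply: subspaceZ => //; apply: SP.
Qed.

End Span.

Lemma infinite_field_uniq_seq (F : fieldType) n :
  infinite_field F -> exists s : seq F, size s = n /\ uniq s.
Proof.
move=> infF; elim: n => [|n [s [<- uniq_s]]]; first by exists [::].
by have [x x_s] := infF s; exists (x :: s); rewrite /= x_s.
Qed.

(* A polynomial of size n is recovered from its values at n distinct scalars
   by inverting a Vandermonde matrix. *)
Lemma subspace_coef_of_evals (F : fieldType) (R : algType F) (P : R -> Prop)
    (G : {poly R}) :
  infinite_field F -> subspace P -> (forall t : F, P G.[t%:A]) -> forall i, P G`_i.
Proof.
move=> infF subP PG i; set n := size G.
have [lt_in | ?] := ltnP i n; last by rewrite nth_default //; apply: subspace0.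
have [s [size_s uniq_s]] := infinite_field_uniq_seq n infF.
pose V := Vandermonde n (\row_(j < n) s`_j); pose i' := Ordinal lt_in.
have V_unit : V \in unitmx.
  rewrite unitmxE unitfE det_Vandermonde; apply/prodf_neq0 => j _.
  apply/prodf_neq0 => k lt_jk; rewrite !mxE subr_eq0 nth_uniq ?size_s //.
  by apply: contraTneq lt_jk => /val_inj ->; rewrite ltnn.
have evalG (j : 'I_n) : G.[(s`_j)%:A] = \sum_(l < n) V l j *: G`_l.
  rewrite horner_coef; apply: eq_bigr => l _.
  by rewrite -(rmorphXn (in_alg R)) /= mulr_algr !mxE.
have VinvV (l : 'I_n) : \sum_(j < n) invmx V j i' * V l j = (l == i')%:R.
  have := congr1 (fun M : 'M[F]_n => M l i') (mulmxV V_unit); rewrite !mxE => <-.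
  by apply: eq_bigr => j _; rewrite mulrC.
have -> : G`_i = \sum_(j < n) invmx V j i' *: G.[(s`_j)%:A].
  under eq_bigr do rewrite evalG scaler_sumr.
  under eq_bigr do under eq_bigr do rewrite scalerA.
  rewrite exchange_big /=; under eq_bigr do rewrite -scaler_suml VinvV.
  rewrite (bigD1 i') //= eqxx scale1r big1 ?addr0 // => l /negPf neq_li.
  by rewrite neq_li scale0r.
by apply: subspace_sum => // j _; apply: subspaceZ.
Qed.

Lemma horner_algE (F : fieldType) (R : algType F) (p : {poly F}) (z : R) :
  horner_alg z p = \sum_(i < size p) p`_i *: z ^+ i.
Proof.
rewrite /horner_alg /horner_morph (@horner_coef_wide _ (size p)) ?size_poly //.
apply: eq_bigr => i _; rewrite coef_map_id0 /= ?scale0r //.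
by rewrite -scalerAl mul1r.
Qed.

Lemma comm_poly_alg (F : fieldType) (R : algType F) (G : {poly R}) (t : F) :
  comm_poly G t%:A.
Proof. by rewrite /comm_poly mulr_algl mulr_algr. Qed.

Lemma coef_exp_1DXnC (R : nzRingType) (c : R) Q n : (0 < Q)%N ->
  ((1 + 'X^Q * c%:P) ^+ n)`_0 = 1 /\ ((1 + 'X^Q * c%:P) ^+ n)`_Q = c *+ n.
Proof.
move=> Q_gt0; elim: n => [|n [IH0 IHQ]]; first by rewrite !coef1 eqxx gtn_eqF.
rewrite exprSr; set P := _ ^+ n in IH0 IHQ *.
rewrite mulrDr mulr1 mulrA (commr_polyXn P Q) -mulrA !coefD !coefXnM.
by rewrite Q_gt0 ltnn subnn coefMC IH0 IHQ mul1r addr0 mulrSr.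
Qed.

(** * Lie ideals of a simple algebra *)

Section Bracket.
Variable R : pzRingType.
Implicit Types a b r s x y : R.

Definition lie x y := x * y - y * x.

Lemma lie_eq0 x y : (lie x y == 0) = (x * y == y * x).
Proof. exact: subr_eq0. Qed.

Lemma lier0 x : lie x 0 = 0.
Proof. by rewrite /lie mulr0 mul0r subrr. Qed.

Lemma lieC x y : lie x y = - lie y x.
Proof. by rewrite /lie opprB. Qed.

Lemma lieD a x y : lie a (x + y) = lie a x + lie a y.
Proof. by rewrite /lie mulrDr mulrDl opprD addrACA. Qed.

Lemma lieN a x : lie a (- x) = - lie a x.
Proof. by rewrite /lie mulrN mulNr opprK opprB addrC. Qed.

Lemma lieB a x y : lie a (x - y) = lie a x - lie a y.
Proof. by rewrite lieD lieN. Qed.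

Lemma lieMr a x y : lie a (x * y) = lie a x * y + x * lie a y.
Proof. by rewrite /lie mulrBl mulrBr !mulrA addrA subrK. Qed.

Lemma lieMl a b r : lie (a * b) r = lie a (b * r) + lie b (r * a).
Proof. by rewrite /lie !mulrA addrA subrK. Qed.

Lemma lie_jacobi a s r : lie a (lie s r) = lie (lie a s) r + lie s (lie a r).
Proof.
rewrite {1}[lie s r]/lie lieB !lieMr; set u := lie a s; set w := lie a r.
by rewrite /lie opprD (addrC (- (w * s))) addrACA.
Qed.

End Bracket.

Lemma lieZ (F : fieldType) (R : algType F) (k : F) (a x : R) :
  lie a (k *: x) = k *: lie a x.
Proof. by rewrite /lie -scalerAr -scalerAl scalerBr. Qed.

Section SimpleAlgebra.
Variables (F : fieldType) (R : algType F).

Definition ideal_core (P : R -> Prop) (x : R) : Prop := forall s r, P (s * x * r).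

Lemma alg_ideal_core P : subspace P -> alg_ideal (ideal_core P).
Proof.
move=> subP; split.
- by move=> s r; rewrite mulr0 mul0r; apply: subspace0.
- by move=> x y Px Py s r; rewrite mulrDr mulrDl; apply: subspaceD.
- by move=> k x Px s r; rewrite -scalerAr -scalerAl; apply: subspaceZ.
- by move=> r x Px s r'; rewrite mulrA.
- by move=> r x Px s r'; rewrite mulrA -(mulrA (s * x)).
Qed.

Hypothesis simpleR : simple_algebra R.

Lemma simple_ideal_total (I : R -> Prop) c :
  alg_ideal I -> I c -> c != 0 -> forall x, I x.
Proof. by move=> idI Ic; have [/(_ c Ic) -> | //] := simpleR.2 I idI; rewrite eqxx. Qed.

Lemma simple_algebra_prime (u v : R) : (forall s, u * s * v = 0) -> u = 0 \/ v = 0.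
Proof.
move=> usv; have [-> | nz_u] := eqVneq u 0; [by left | right].
have subP : subspace (fun y : R => y * v = 0).
  split=> [|x y xv yv|k x xv]; first exact: mul0r.
    by rewrite mulrDl xv yv addr0.
  by rewrite -scalerAl xv scaler0.
have core_u : ideal_core (fun y => y * v = 0) u.
  by move=> s r; rewrite -!mulrA (mulrA u) usv mulr0.
by have := simple_ideal_total (alg_ideal_core subP) core_u nz_u 1 1 1; rewrite !mul1r.
Qed.

End SimpleAlgebra.

Section LieIdeal.
Variables (F : fieldType) (R : algType F).

Definition lie_ideal (V : R -> Prop) : Prop := subspace V /\ forall z v, V v -> V (lie z v).

Definition lie_idealizer (V : R -> Prop) (x : R) : Prop := forall r, V (lie x r).

Variable V : R -> Prop.
Hypotheses (subV : subspace V) (lieV : forall z v, V v -> V (lie z v)).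
Local Notation T := (lie_idealizer V).

Lemma subspace_lie_idealizer : subspace T.
Proof.
split.
- by move=> r; rewrite lieC lier0 oppr0; apply: subspace0.
- by move=> x y Tx Ty r; rewrite lieC lieD opprD -!lieC; apply: subspaceD.
- by move=> k x Tx r; rewrite lieC lieZ -scalerN -lieC; apply: subspaceZ.
Qed.

Lemma lie_idealizerM a b : T a -> T b -> T (a * b).
Proof. by move=> Ta Tb r; rewrite lieMl; exact: subspaceD. Qed.

Lemma lie_idealizer_lie a s : T a -> T (lie a s).
Proof.
move=> Ta r; rewrite -(addrK (lie s (lie a r)) (lie (lie a s) r)) -lie_jacobi.
by apply: subspaceB => //; apply: lieV.
Qed.

Lemma lie_ideal_commutators a b :
  simple_algebra R -> T a -> T b -> lie a b != 0 -> forall x y, V (lie x y).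
Proof.
move=> simpleR Ta Tb nz_ab; set c := lie a b in nz_ab *.
have subT := subspace_lie_idealizer.
have Tcr r : T (c * r).
  have -> : c * r = lie a (b * r) - b * lie a r by rewrite lieMr addrK.
  apply: (subspaceB subT); first exact: lie_idealizer_lie.
  exact/lie_idealizerM/lie_idealizer_lie.
have core_c : ideal_core T c.
  move=> s r; have -> : s * c * r = c * (r * s) - lie (c * r) s.
    by rewrite /lie opprB !mulrA addrC subrK.
  by apply: (subspaceB subT); [apply: Tcr | apply/lie_idealizer_lie/Tcr].
move=> x y; have := simple_ideal_total simpleR (alg_ideal_core subT) core_c nz_ab 1 x 1 y.
by rewrite !mulr1.
Qed.

End LieIdeal.

(** * The span of the p(ab) - p(ba) *)

Definition polycomm_span (F : fieldType) (R : algType F) (p : {poly F}) : R -> Prop :=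
  span_F (fun y : R => exists a b : R, y = horner_alg (a * b) p - horner_alg (b * a) p).

Section Linearization.
Variables (F : fieldType) (R : algType F).
Implicit Types x y h : R.

Definition line_poly y h : {poly R} := y%:P + 'X * h%:P.

Lemma horner_line_poly y h (t : F) : (line_poly y h).[t%:A] = y + t *: h.
Proof. by rewrite hornerD hornerC -commr_polyX hornerMX hornerC mulr_algr. Qed.

Lemma coef_line_poly y h i :
  (line_poly y h)`_i = if i == 0%N then y else if i == 1%N then h else 0.
Proof.
rewrite coefD coefC -commr_polyX coefMX coefC.
by case: i => [|[|i]]; rewrite /= ?addr0 ?add0r.
Qed.

Lemma coef0_line_poly_exp y h k : (line_poly y h ^+ k)`_0 = y ^+ k.
Proof.
elim: k => [|k IHk]; first by rewrite coef1.
by rewrite exprSr coef0M IHk coef_line_poly exprSr.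
Qed.

Lemma coef1_line_poly_expS y h k :
  (line_poly y h ^+ k.+1)`_1 = (line_poly y h ^+ k)`_1 * y + y ^+ k * h.
Proof.
rewrite exprSr coefM big_ord_recr big_ord1 /= coef0_line_poly_exp !coef_line_poly.
by rewrite addrC.
Qed.

Lemma coef1_line_poly_exp_lie x y k :
  (line_poly y (x * y) ^+ k)`_1 - (line_poly y (y * x) ^+ k)`_1 = lie x (y ^+ k).
Proof.
elim: k => [|k IHk]; first by rewrite coef1 subrr /lie !expr0 mulr1 mul1r subrr.
rewrite !coef1_line_poly_expS opprD addrACA -mulrBl IHk -mulrBr.
by rewrite -[x * y - y * x]/(lie x y) -lieMr -exprSr.
Qed.

Definition horner_alg_poly (p : {poly F}) (P : {poly R}) : {poly R} :=
  \sum_(i < size p) (p`_i)%:A%:P * P ^+ i.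

Lemma horner_horner_alg_poly p P (t : F) :
  (horner_alg_poly p P).[t%:A] = horner_alg P.[t%:A] p.
Proof.
rewrite horner_algE horner_sum; apply: eq_bigr => i _.
by rewrite hornerCM horner_exp_comm ?mulr_algl //; apply: comm_poly_alg.
Qed.

Lemma coef_horner_alg_poly p P i :
  (horner_alg_poly p P)`_i = \sum_(j < size p) p`_j *: (P ^+ j)`_i.
Proof. by rewrite coef_sum; apply: eq_bigr => j _; rewrite coefCM mulr_algl. Qed.

(* [lie x (p(y))] is the coefficient of [t] in [p((1 + t x) y) - p(y (1 + t x))]. *)
Lemma polycomm_span_lie_horner (p : {poly F}) x y :
  infinite_field F -> polycomm_span p (lie x (horner_alg y p)).
Proof.
move=> infF; set G := horner_alg_poly p (line_poly y (x * y)) -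
                      horner_alg_poly p (line_poly y (y * x)).
have -> : lie x (horner_alg y p) = G`_1.
  rewrite coefB !coef_horner_alg_poly -sumrB horner_algE /lie mulr_sumr mulr_suml.
  rewrite -sumrB; apply: eq_bigr => i _; rewrite -scalerBr coef1_line_poly_exp_lie.
  by rewrite /lie scalerBr scalerAr scalerAl.
apply: (subspace_coef_of_evals infF (subspace_span_F _)) => t.
rewrite hornerD hornerN !horner_horner_alg_poly !horner_line_poly.
apply: mem_span_F; exists (1 + t *: x), y.
by rewrite mulrDl mul1r -scalerAl mulrDr mulr1 -scalerAr.
Qed.

Lemma lie_ideal_polycomm_span (p : {poly F}) :
  infinite_field F -> lie_ideal (polycomm_span p : R -> Prop).
Proof.
move=> infF; have subV : subspace (polycomm_span p : R -> Prop) := subspace_span_F _.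
split=> // z; apply: span_F_min => [|_ [a [b ->]]].
  split=> [|u v Vu Vv|k v Vv]; first by rewrite lier0; apply: subspace0.
    by rewrite lieD; apply: subspaceD.
  by rewrite lieZ; apply: subspaceZ.
by rewrite lieB; apply: subspaceB => //; apply: polycomm_span_lie_horner.
Qed.

End Linearization.

(** * Central powers *)

Lemma exprDn_pchar_comm (R : nzRingType) (x y : R) n :
  [pchar R].-nat n -> GRing.comm x y -> (x + y) ^+ n = x ^+ n + y ^+ n.
Proof.
move=> pcharn cxy; pose p := pdiv n.
have [|n_gt1] := leqP n 1; first by case: (n) pcharn => [|[]] // _; rewrite !expr1.
have pcharRp : p \in [pchar R] by rewrite (pnatPpi pcharn) // pi_pdiv.
have /p_natP[e ->] : p.-nat n by rewrite -(eq_pnat _ (pcharf_eq pcharRp)).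
elim: e => [|e IHe]; first by rewrite !expr1.
rewrite expnSr !exprM IHe -!(pFrobenius_autE pcharRp) pFrobenius_autD_comm //.
exact/commrX/commr_sym/commrX/commr_sym.
Qed.

Lemma exprBn_pchar_comm (R : nzRingType) (x y : R) n :
  [pchar R].-nat n -> GRing.comm x y -> (x - y) ^+ n = x ^+ n - y ^+ n.
Proof. by move=> pcharn cxy; rewrite exprDn_pchar_comm ?exprNn_pchar //; apply: commrN. Qed.

Definition central (R : pzRingType) (z : R) : Prop := forall r, GRing.comm z r.

Section Centre.
Variables (F : fieldType) (R : algType F).
Implicit Types a x y : R.

Lemma subspace_central : subspace (@central R).
Proof.
split=> [r|x y Zx Zy r|k x Zx r]; first by rewrite /GRing.comm mul0r mulr0.
  by rewrite /GRing.comm mulrDl mulrDr Zx Zy.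
by rewrite /GRing.comm -scalerAl -scalerAr Zx.
Qed.

Lemma central_scale (k : F) x : k != 0 -> central (k *: x) -> central x.
Proof.
move=> nz_k Zkx; rewrite -[x](scalerK nz_k).
exact: subspaceZ subspace_central _ _ Zkx.
Qed.

(* In characteristic 2, [lie (a * a) r = lie a (lie a r)]; otherwise
   [lie a r * s * lie a r = 0] for all [s], and R is prime. *)
Lemma central_sq_of_lie_lie_eq0 a :
  simple_algebra R -> (forall r, lie a (lie a r) = 0) -> central (a * a).
Proof.
move=> simpleR adad.
have [char2 | nchar2] := eqVneq (2%:R : F) 0.
  move=> r; apply/eqP; rewrite -lie_eq0.
  have e : lie a (lie a r + r * a) = lie a (a * r) by rewrite /lie subrK.
  by rewrite lieMl -e lieD -addrA -mulr2n adad add0r -scaler_nat char2 scale0r.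
have ad_ad r s : lie a r * lie a s = 0.
  have := adad (r * s); rewrite lieMr lieD !lieMr !adad mul0r mulr0 add0r addr0.
  by rewrite -mulr2n -scaler_nat => /eqP; rewrite scaler_eq0 (negPf nchar2) => /eqP.
have ad_a0 r : lie a r = 0.
  have [] // := simple_algebra_prime simpleR (u := lie a r) (v := lie a r).
  move=> s; rewrite -mulrA -[s * lie a r](addKr (lie a s * r)) -lieMr.
  by rewrite mulrDr mulrN mulrA ad_ad mul0r oppr0 add0r ad_ad.
have comm_a r : a * r = r * a by apply/eqP; rewrite -lie_eq0 ad_a0.
by move=> r; rewrite /GRing.comm -mulrA comm_a comm_a -mulrA.
Qed.

Lemma central_exp_of_central_poly (q : {poly F}) :
  infinite_field F -> (1 < size q)%N -> (forall y : R, central (horner_alg y q)) ->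
  forall y : R, central (y ^+ (size q).-1).
Proof.
move=> infF size_q Zq y.
pose G : {poly R} := \poly_(i < size q) (q`_i *: y ^+ i).
have ZG t : central G.[t%:A].
  suff -> : G.[t%:A] = horner_alg (t *: y) q by [].
  rewrite horner_poly horner_algE; apply: eq_bigr => i _.
  by rewrite -(rmorphXn (in_alg R)) /= mulr_algr exprZn !scalerA mulrC.
have := subspace_coef_of_evals infF subspace_central ZG (size q).-1.
rewrite coef_poly prednK ?(ltnW size_q) // leqnn -lead_coefE.
by apply: central_scale; rewrite lead_coef_eq0 -size_poly_eq0 -lt0n ltnW.
Qed.

(* For [m = Q * m'], Frobenius gives [(1 + t x) ^+ m = (1 + t ^+ Q x ^+ Q) ^+ m'],
   whose coefficient of [t ^+ Q] is [m' x ^+ Q], and [m'] is nonzero in F. *)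
Lemma central_exp_pchar_part m :
  infinite_field F -> (0 < m)%N -> (forall y : R, central (y ^+ m)) ->
  forall y : R, central (y ^+ (m`_[pchar F])%N).
Proof.
move=> infF m_gt0 Zm x; set Q := (m`_[pchar F])%N; set m' := (m`_[pchar F]^')%N.
have Q_gt0 : (0 < Q)%N := part_gt0 _ _.
pose G : {poly R} := (1 + 'X^Q * (x ^+ Q)%:P) ^+ m'.
have ZG t : central G.[t%:A].
  suff -> : G.[t%:A] = (1 + t *: x) ^+ m by [].
  rewrite -(partnC [pchar F] m_gt0) exprM exprDn_pchar_comm; first last.
  - exact/commr_sym/commr1.
  - by rewrite (eq_pnat _ (pchar_lalg R)) part_pnat.
  rewrite expr1n exprZn horner_exp_comm ?hornerD ?hornerC; last exact: comm_poly_alg.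
  rewrite hornerM_comm ?hornerXn ?hornerC; last exact: comm_poly_alg.
  by rewrite -(rmorphXn (in_alg R)) mulr_algl.
have := subspace_coef_of_evals infF subspace_central ZG Q.
rewrite (coef_exp_1DXnC _ _ Q_gt0).2 -scaler_nat; apply: central_scale.
by rewrite natf_neq0_pchar part_pnat.
Qed.

Lemma central_unit (z : R) :
  simple_algebra R -> central z -> z != 0 -> exists2 w, z * w = 1 & central w.
Proof.
move=> simpleR Zz nz_z.
have idzR : alg_ideal (fun x : R => exists r, x = z * r).
  split.
  - by exists 0; rewrite mulr0.
  - by move=> _ _ [r1 ->] [r2 ->]; exists (r1 + r2); rewrite mulrDr.
  - by move=> k _ [r ->]; exists (k *: r); rewrite scalerAr.
  - by move=> r _ [r1 ->]; exists (r * r1); rewrite mulrA -Zz mulrA.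
  - by move=> r _ [r1 ->]; exists (r1 * r); rewrite mulrA.
have zR : exists r, z = z * r by exists 1; rewrite mulr1.
have [w /esym zw] := simple_ideal_total simpleR idzR zR nz_z 1.
exists w => // r; rewrite /GRing.comm -[w * r]mulr1 -zw mulrA -(mulrA w r z) -Zz.
by rewrite (mulrA w z r) -Zz zw mul1r.
Qed.

End Centre.

(** * Commutativity *)

Definition invertible (R : pzRingType) (y : R) : Prop := exists u, u * y = 1 /\ y * u = 1.

Lemma nilpotent_linv_trivial (R : pzRingType) (u y : R) n :
  u * y = 1 -> y ^+ n = 0 -> (1 : R) = 0.
Proof.
move=> uy yn; suff <- : u ^+ n * y ^+ n = 1 by rewrite yn mulr0.
elim: n {yn} => [|n IHn]; first by rewrite mulr1.
by rewrite exprSr exprS -mulrA (mulrA u) uy mul1r.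
Qed.

Lemma nilpotent_rinv_trivial (R : pzRingType) (u y : R) n :
  y * u = 1 -> y ^+ n = 0 -> (1 : R) = 0.
Proof.
move=> yu yn; suff <- : y ^+ n * u ^+ n = 1 by rewrite yn mul0r.
elim: n {yn} => [|n IHn]; first by rewrite mulr1.
by rewrite exprSr exprS -mulrA (mulrA y) yu mul1r.
Qed.

Section Division.
Variables (F : fieldType) (R : algType F) (Q : nat).
Hypotheses (simpleR : simple_algebra R) (Q_gt0 : (0 < Q)%N).
Hypothesis ZQ : forall x : R, central (x ^+ Q).

Lemma invertible_or_nilpotent (y : R) : invertible y \/ y ^+ Q = 0.
Proof.
have [|nz_yQ] := eqVneq (y ^+ Q) 0; [by right | left].
have [w yQw Zw] := central_unit simpleR (ZQ y) nz_yQ.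
exists (y ^+ Q.-1 * w); split; first by rewrite -mulrA Zw mulrA -exprSr prednK.
by rewrite mulrA -exprS prednK.
Qed.

(* Elements with [y ^+ Q = 0] form an ideal, which must be 0. *)
Lemma simple_invertible (y : R) : y != 0 -> invertible y.
Proof.
have nz1 := simpleR.1.
have nil_lmul (r x : R) : x ^+ Q = 0 -> (r * x) ^+ Q = 0.
  move=> xQ; case: (invertible_or_nilpotent (r * x)) => // [[u [urx _]]].
  by move: nz1; rewrite (@nilpotent_linv_trivial _ (u * r) x Q) ?eqxx // -mulrA.
have nil_rmul (r x : R) : x ^+ Q = 0 -> (x * r) ^+ Q = 0.
  move=> xQ; case: (invertible_or_nilpotent (x * r)) => // [[u [_ xru]]].
  by move: nz1; rewrite (@nilpotent_rinv_trivial _ (r * u) x Q) ?eqxx // mulrA.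
have idN : alg_ideal (fun x : R => x ^+ Q = 0).
  split=> [|x1 x2 x1Q x2Q|k x xQ| |]; [ | | | exact: nil_lmul | exact: nil_rmul].
  - by rewrite expr0n gtn_eqF.
  - case: (invertible_or_nilpotent (x1 + x2)) => // [[u [ux _]]].
    have : (u * x2) * \sum_(i < Q) (u * x1) ^+ i = 1.
      rewrite -[u * x2](addKr (u * x1)) -mulrDr ux addrC.
      by rewrite -[1 - _]opprB mulNr -subrX1 nil_lmul // sub0r opprK.
    move/nilpotent_rinv_trivial/(_ (nil_lmul u _ x2Q)) => one0.
    by rewrite one0 eqxx in nz1.
  - by rewrite exprZn xQ scaler0.
move=> nz_y; case: (invertible_or_nilpotent y) => // yQ.
have := simple_ideal_total simpleR idN yQ nz_y 1.
by rewrite expr1n => /eqP; rewrite (negPf nz1).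
Qed.

End Division.

(* [lie a] is left minus right multiplication by [a]; these commute, and
   under evaluation at [a] they are realised by [a%:P] and ['X]. *)
Lemma iter_lie_horner (R : nzRingType) (a y : R) k :
  iter k (lie a) y = ((a%:P - 'X) ^+ k * y%:P).[a].
Proof.
elim: k => [|k IHk]; first by rewrite mul1r hornerC.
rewrite iterS IHk exprS -mulrA mulrBl hornerD hornerN hornerCM.
by rewrite -commr_polyX hornerMX.
Qed.

Lemma iter_lie_pchar (R : nzRingType) (a y : R) n :
  [pchar R].-nat n -> iter n (lie a) y = lie (a ^+ n) y.
Proof.
move=> pcharn.
have pcharPn : [pchar {poly R}].-nat n by rewrite (eq_pnat _ (pchar_poly R)).
rewrite iter_lie_horner exprBn_pchar_comm //; last exact: commr_polyX.
rewrite -polyC_exp mulrBl hornerD hornerN hornerCM hornerC -commr_polyXn.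
by rewrite hornerCM hornerXn.
Qed.

Lemma iter_last_nonzero (V : zmodType) (f : V -> V) n b :
  f 0 = 0 -> iter n f b = 0 -> f b != 0 -> exists y, f y != 0 /\ f (f y) = 0.
Proof.
move=> f0; elim: n b => [|n IHn] b; first by move=> /= ->; rewrite f0 eqxx.
rewrite iterSr => fnb0 nz_fb.
by have [|nz_ffb] := eqVneq (f (f b)) 0; [exists b | apply: IHn fnb0 nz_ffb].
Qed.

Section Commutativity.
Variables (F : fieldType) (R : algType F) (Q : nat).
Hypotheses (simpleR : simple_algebra R) (pcharQ : [pchar R].-nat Q).
Hypothesis ZQ : forall x : R, central (x ^+ Q).

(* If [lie a] is not zero, it kills some [w = lie a y != 0]; then [c = y / w]
   satisfies [lie a c = 1], and [x = a * c] has [x ^+ Q * a = a * (x - 1) ^+ Q],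
   which together with the centrality of [x ^+ Q] forces [a = 0]. *)
Lemma commutative_of_central_pchar_exp (a b : R) : GRing.comm a b.
Proof.
have Q_gt0 : (0 < Q)%N by case/andP: pcharQ.
have [/eqP | nz_ab] := eqVneq (lie a b) 0; first by rewrite lie_eq0 => /eqP.
have iterQ : iter Q (lie a) b = 0 by rewrite iter_lie_pchar // /lie (ZQ a b) subrr.
have [y [nz_w ww0]] := iter_last_nonzero (lier0 a) iterQ nz_ab.
set w := lie a y in nz_w ww0.
have [wi [wiw wwi]] := simple_invertible simpleR Q_gt0 ZQ nz_w.
have aw : a * w = w * a by apply/eqP; rewrite -lie_eq0 ww0.
have awi : a * wi = wi * a.
  by rewrite -[wi * a]mulr1 -wwi mulrA -(mulrA wi a w) aw mulrA wiw mul1r.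
set c := y * wi.
have ca : c * a = a * c - 1.
  have ac : lie a c = 1 by rewrite lieMr -/w wwi /lie awi subrr mulr0 addr0.
  by rewrite -ac /lie opprB addrC subrK.
set x := a * c.
have xka k : x ^+ k * a = a * (x - 1) ^+ k.
  elim: k => [|k IHk]; first by rewrite mul1r mulr1.
  by rewrite exprSr -mulrA /x -mulrA ca -/x mulrA IHk -mulrA -exprSr.
have := xka Q; rewrite exprBn_pchar_comm ?expr1n //; last exact: commr1.
rewrite (ZQ x a) mulrBr mulr1 => /eqP; rewrite -subr_eq0 opprB addrC subrK => /eqP a0.
by move: nz_ab; rewrite a0 /lie mul0r mulr0 subrr eqxx.
Qed.

End Commutativity.

Lemma commutative_of_central_poly (F : fieldType) (R : algType F) (q : {poly F}) :
  infinite_field F -> simple_algebra R -> (1 < size q)%N ->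
  (forall y : R, central (horner_alg y q)) -> forall a b : R, GRing.comm a b.
Proof.
move=> infF simpleR size_q Zq.
have deg_gt0 : (0 < (size q).-1)%N by rewrite -ltnS prednK // ltnW.
apply: (@commutative_of_central_pchar_exp _ _ ((size q).-1`_[pchar F])%N simpleR).
  by rewrite (eq_pnat _ (pchar_lalg R)) part_pnat.
exact/central_exp_pchar_part/central_exp_of_central_poly.
Qed.

Unset Implicit Arguments.

Theorem corollary4p9 (F : fieldType) (R : algType F) (p : {poly F}) :
  infinite_field F -> simple_algebra R -> (1 < size p)%N ->
  forall x : R,
    span_F (fun y : R => exists a b : R, y = a * b - b * a) x ->
    span_F (fun y : R => exists a b : R,
               y = horner_alg (a * b) p - horner_alg (b * a) p) x.
Proof.
move=> infF simpleR size_p.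
have [subV lieV] := lie_ideal_polycomm_span R p infF.
suff Vlie (a b : R) : polycomm_span p (lie a b).
  by apply: span_F_min => // _ [a [b ->]]; apply: Vlie.
have Tp (y : R) : lie_idealizer (polycomm_span p) (horner_alg y p).
  by move=> r; rewrite lieC; apply: (subspaceN subV); apply: polycomm_span_lie_horner.
have [[y [r nz_yr]] | Tcomm] := classic (exists y r : R,
    lie (horner_alg y p) (lie (horner_alg y p) r) != 0).
  have Tyr := lie_idealizer_lie subV lieV r (Tp y).
  exact: (lie_ideal_commutators subV lieV simpleR (Tp y) Tyr nz_yr).
have Zp2 (y : R) : central (horner_alg y (p * p)).
  rewrite rmorphM; apply: central_sq_of_lie_lie_eq0 => // r.
  by apply: contra_not_eq Tcomm => nz; exists y, r.
have size_p2 : (1 < size (p * p)%R)%N.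
  have nz_p : p != 0 :> {poly F} by rewrite -size_poly_eq0 -lt0n ltnW.
  by rewrite size_mul //; case: (size p) size_p => [|[|n]] // _; rewrite addnS.
rewrite /lie (commutative_of_central_poly infF simpleR size_p2 Zp2 a b) subrr.
exact: subspace0.
Qed.
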